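(* For all integers $n\ge k\ge0$ and all complex $r$: (i) $S_{n,k}(0,0;r)=\binom nk r^{n-k}$; (ii) $S_{n,k}(1,1;r)=\binom nk r^{\underline{n-k}}$; (iii) $S_{n,k}(-1,1;r)=\binom nk (n+r-1)^{\underline{n-k}}$; (iv) $S_{n,k}(1,2;r)=\binom nk\,k!\,2^{-(n-k)}\sum_{j=0}^{n-k}\frac{(-r)^{\overline j}(-n+k)^{\overline j}}{j!\,\Gamma(2k-n+1+j)}2^j$, where $1/\Gamma$ vanishes at nonpositive integers (i.e. $\binom nk\frac{k!}{(2k-n)!}2^{-(n-k)}{}_2F_1(-r,-n+k;-n+2k+1\mid2)$ suitably regularized); (v) $S_{n,k}(-2,-1;r)=\binom nk\frac{(2n-k)!}{n!}2^{-(n-k)}\sum_{j=0}^{n-k}\frac{(r-1)^{\overline j}(-n+k)^{\overline j}}{j!\,(-2n+k)^{\overline j}}2^j$, the sum being interpreted as $1$ when $n=k=0$.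
   Context: Hsu–Shiue Stirling numbers $S_{n,k}(a,b;r)$: defined by $S_{0,0}=1$, $S_{n,k}=0$ if $n<0$, $k<0$ or $k>n$, and $S_{n+1,k+1}=[-an+b(k+1)+r]S_{n,k+1}+S_{n,k}$ for $n\ge0$, $k\in\mathbb Z$. $x^{\underline m}=x(x-1)\cdots(x-m+1)$, $x^{\overline m}=x(x+1)\cdots(x+m-1)$. *)

(* Complex numbers: any numClosedFieldType (covers C). *)
From mathcomp Require Import all_boot all_order all_algebra.
Set Implicit Arguments. Unset Strict Implicit. Unset Printing Implicit Defensive.
Import Order.TTheory GRing.Theory Num.Theory.
Local Open Scope ring_scope.

(* Hsu--Shiue Stirling numbers S_{n,k}(a,b;r), for n k : nat
   (negative indices give 0 by definition).
   S_{0,k} = [k = 0];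
   S_{n+1,k} = (-a n + b k + r) S_{n,k} + S_{n,k-1}  (S_{n,-1} = 0). *)
Fixpoint HS (C : numClosedFieldType) (a b r : C) (n k : nat) {struct n} : C :=
  match n with
  | 0 => (k == 0)%:R
  | n'.+1 => (- a * n'%:R + b * k%:R + r) * HS a b r n' k
             + match k with 0 => 0 | k'.+1 => HS a b r n' k' end
  end.

Definition ffall (C : numClosedFieldType) (x : C) (m : nat) : C :=
  \prod_(i < m) (x - i%:R).
Definition rfact (C : numClosedFieldType) (x : C) (m : nat) : C :=
  \prod_(i < m) (x + i%:R).

(* 1/Gamma(m) at an integer m: 0 if m <= 0, 1/(m-1)! otherwise. *)
Definition rgamma_int (C : numClosedFieldType) (m : int) : C :=
  if (0 < m)%R then ((`|m|%N.-1)`!%:R)^-1 else 0.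

(* Each identity is checked against the defining recurrence, which determines
   S_{n,k} uniquely.  In (i)-(iii) the closed form C(n,k) f(n-k) satisfies it by
   Pascal's rule.  In (iv) and (v), after the substitution i = n - k - j the
   summands become (2i+s+q)!/(i! s! q! 2^i) times r^{\underline q} resp.
   (r-1)^{\overline q}, where q = n - k - i and s = k - i resp. s = k.  This
   coefficient counts the ways of splitting 2i+s+q labelled points into i pairs
   and s + q singletons of two colours; classifying the last point gives
   three-term recurrences for the summands whose coefficients add up to that of
   S, so the row sums satisfy the recurrence of S. *)

From mathcomp Require Import all_boot all_order all_algebra.
From mathcomp Require Import zify ring.
Import Order.TTheory GRing.Theory Num.Theory.
Local Open Scope ring_scope.
Set Implicit Arguments. Unset Strict Implicit. Unset Printing Implicit Defensive.

Section Recurrence.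
Variables (C : numClosedFieldType) (a b r : C).

Lemma HS_unique (T : nat -> nat -> C) :
  (forall k, T 0%N k = (k == 0%N)%:R) ->
  (forall n k, T n.+1 k = (- a * n%:R + b * k%:R + r) * T n k
                          + (if k is k'.+1 then T n k' else 0)) ->
  forall n k, HS a b r n k = T n k.
Proof.
move=> T0 TS; elim=> [|n IH] k /=; first by rewrite T0.
by case: k => [|k]; rewrite TS !IH.
Qed.

Lemma HS_sum (H al be : nat -> nat -> nat -> C) :
  (forall k i, H 0%N k i = ((k == 0%N) && (i == 0%N))%:R) ->
  (forall n k i, (n < i)%N -> H n k i = 0) ->
  (forall n k i, H n.+1 k i = al n k i * H n k i
        + (if k is k'.+1 then H n k' i else 0)
        + (if i is i'.+1 then be n k i * H n k i' else 0)) ->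
  (forall n k i, al n k i + be n k i.+1 = - a * n%:R + b * k%:R + r) ->
  forall n k, HS a b r n k = \sum_(i < n.+1) H n k i.
Proof.
move=> H0 Hgt Hrec Hcoef; apply: HS_unique => [k|n k].
  by rewrite big_ord1 H0 andbT.
under eq_bigr => i _ do rewrite Hrec.
rewrite !big_split /= [X in _ + X]big_ord_recl /= add0r.
rewrite [X in X + _ + _ = _]big_ord_recr /= Hgt // mulr0 addr0.
have -> : \sum_(i < n.+2) (if k is k'.+1 then H n k' i else 0)
          = if k is k'.+1 then \sum_(i < n.+1) H n k' i else 0.
  by case: k => [|k]; [rewrite big1 | rewrite big_ord_recr /= Hgt // addr0].
rewrite addrAC mulr_sumr -big_split /=; congr (_ + _).
by apply: eq_bigr => i _; rewrite -mulrDl Hcoef.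
Qed.
End Recurrence.

Section Factorials.
Variable C : numClosedFieldType.
Implicit Types (x : C) (m j : nat).

Lemma natr_fact_neq0 m : m`!%:R != 0 :> C.
Proof. by rewrite pnatr_eq0 -lt0n fact_gt0. Qed.

Lemma natr_binE n k : (k <= n)%N ->
  'C(n, k)%:R = n`!%:R / (k`!%:R * (n - k)`!%:R) :> C.
Proof.
by move=> le_kn; rewrite -(bin_fact le_kn) !natrM mulfK // mulf_neq0 ?natr_fact_neq0.
Qed.

Lemma ffallS x m : ffall x m.+1 = ffall x m * (x - m%:R).
Proof. by rewrite /ffall big_ord_recr. Qed.

Lemma ffallSl x m : ffall (x + 1) m.+1 = (x + 1) * ffall x m.
Proof.
rewrite /ffall big_ord_recl subr0; congr (_ * _).
by apply: eq_bigr => i _; rewrite /= /bump /= add1n -natr1; ring.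
Qed.

Lemma rfactS x m : rfact x m.+1 = rfact x m * (x + m%:R).
Proof. by rewrite /rfact big_ord_recr. Qed.

Lemma rfactN x m : rfact (- x) m = (-1) ^+ m * ffall x m.
Proof.
elim: m => [|m IH]; first by rewrite /rfact /ffall !big_ord0 mulr1.
by rewrite rfactS ffallS IH exprS; ring.
Qed.

Lemma rfactNN x y m : rfact (- x) m * rfact (- y) m = ffall x m * ffall y m.
Proof. by rewrite !rfactN mulrACA -exprMn mulrNN mulr1 expr1n mul1r. Qed.

Lemma ffall_natE m j : (j <= m)%N -> ffall (m%:R : C) j = m`!%:R / (m - j)`!%:R.
Proof.
move=> le_jm; rewrite -(ffact_fact le_jm) natrM mulfK ?natr_fact_neq0 //.
elim: j le_jm => [|j IH] lt_jm; first by rewrite /ffall big_ord0 ffactn0.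
by rewrite ffallS ffactnSr natrM natrB ?IH // ltnW.
Qed.

Lemma rgamma_int_pos m : rgamma_int C m.+1 = (m`!%:R)^-1.
Proof. by rewrite /rgamma_int ltz_nat absz_nat. Qed.

Lemma rgamma_int_le0 z : z <= 0 -> rgamma_int C z = 0.
Proof. by rewrite /rgamma_int leNgt => /negbTE ->. Qed.

Lemma sum_rev_trunc (F : nat -> C) n m : (m <= n)%N ->
  (forall i, (m < i)%N -> F i = 0) ->
  \sum_(i < n.+1) F i = \sum_(j < m.+1) F (m - j)%N.
Proof.
move=> le_mn F_gt; rewrite -!(big_mkord xpredT) (@big_cat_nat _ _ _ m.+1) //=.
rewrite [X in _ + X]big1_seq ?addr0 => [|i /andP[_]]; last first.
  by rewrite mem_index_iota => /andP[lt_mi _]; exact: F_gt.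
by rewrite big_rev_mkord subn0; apply: eq_bigr => j _; rewrite subSS.
Qed.

End Factorials.

Section ClosedForms.
Variable C : numClosedFieldType.
Implicit Type r : C.

Lemma HS_diag (a r : C) n k :
  HS a a r n k = 'C(n, k)%:R * \prod_(i < n - k) (r - a * i%:R).
Proof.
move: n k; apply: HS_unique => [[|k]|n [|k]] /=.
- by rewrite big_ord0 mulr1.
- by rewrite bin0n mul0r.
- by rewrite !bin0 !subn0 big_ord_recr /=; ring.
rewrite binS natrD mulrDl subSS; congr (_ + _).
case: (ltnP k n) => [lt_kn|le_nk]; last by rewrite bin_small ?ltnS // !(mul0r, mulr0).
by rewrite -(subnSK lt_kn) big_ord_recr /= natrB //; ring.
Qed.

Lemma HS_0_0 r n k : HS 0 0 r n k = 'C(n, k)%:R * r ^+ (n - k).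
Proof.
by rewrite HS_diag; under eq_bigr do rewrite mul0r subr0; rewrite prodr_const card_ord.
Qed.

Lemma HS_1_1 r n k : HS 1 1 r n k = 'C(n, k)%:R * ffall r (n - k).
Proof. by rewrite HS_diag; under eq_bigr do rewrite mul1r. Qed.

Lemma HS_N1_1 r n k :
  HS (-1) 1 r n k = 'C(n, k)%:R * ffall (n%:R + r - 1) (n - k).
Proof.
have shiftE m : m.+1%:R + r - 1 = (m%:R + r - 1) + 1 :> C by rewrite -natr1; ring.
move: n k; apply: HS_unique => [[|k]|n [|k]] /=.
- by rewrite /ffall big_ord0 mulr1.
- by rewrite bin0n mul0r.
- by rewrite !bin0 !subn0 shiftE ffallSl; ring.
rewrite binS natrD mulrDl subSS shiftE.
case: (ltnP k n) => [lt_kn|le_nk]; last first.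
  have /eqP nk0 : (n - k == 0)%N by rewrite subn_eq0.
  by rewrite bin_small ?ltnS // nk0 /ffall !big_ord0 !(mul0r, mulr0, add0r).
have binE : 'C(n, k.+1)%:R = (n%:R - k%:R) / k.+1%:R * 'C(n, k)%:R :> C.
  rewrite -(natrB _ (ltnW lt_kn)) -mulrAC -natrM -mul_bin_left natrM.
  by rewrite mulrAC divff ?mul1r // pnatr_eq0.
rewrite -(subnSK lt_kn) ffallSl ffallS binE natrB // -!natr1.
by field; rewrite natr1 pnatr_eq0.
Qed.

End ClosedForms.

Ltac field_neq0 := rewrite ?nat1r; repeat (apply/andP; split);
  rewrite ?mulf_neq0 ?expf_neq0 ?natr_fact_neq0 ?pnatr_eq0 ?oppr_eq0 ?oner_eq0.

Section PairMultinomial.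
Variable C : numClosedFieldType.

Definition pair_multinomial p s q : C :=
  (2 * p + s + q)`!%:R / (p`!%:R * s`!%:R * q`!%:R * 2 ^+ p).
Local Notation F := pair_multinomial.

Lemma pair_multinomial_mulq p s q : q%:R * F p s q
  = (2 * p + s + q)%:R * (if q is q'.+1 then F p s q' else 0).
Proof.
case: q => [|q]; first by rewrite mul0r mulr0.
by rewrite /F addnS !factS !natrM; field; field_neq0.
Qed.

Lemma pair_multinomial_muls p s q : s%:R * F p s q
  = (2 * p + s + q)%:R * (if s is s'.+1 then F p s' q else 0).
Proof.
case: s => [|s]; first by rewrite mul0r mulr0.
by rewrite /F addnS addSn !factS !natrM; field; field_neq0.
Qed.

Lemma pair_multinomial_mul_unpair p s q : (2 * p)%:R * F p s q
  = (2 * p + s + q)%:R * (if p is p'.+1 then s.+1%:R * F p' s.+1 q else 0).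
Proof.
case: p => [|p]; first by rewrite muln0 mul0r mulr0.
by rewrite /F mulnS add2n addnS !addSn !factS !natrM exprS; field; field_neq0.
Qed.

Lemma pair_multinomial_mul_remove p s q : (2 * p)%:R * F p s q
  = (2 * p + s + q)%:R * (if p is p'.+1 then (2 * p' + s + q).+1%:R * F p' s q else 0).
Proof.
case: p => [|p]; first by rewrite muln0 mul0r mulr0.
by rewrite /F mulnS add2n !addSn !factS !natrM exprS; field; field_neq0.
Qed.

Lemma pair_multinomial_unpair p s q : (0 < 2 * p + s + q)%N ->
  F p s q = (if q is q'.+1 then F p s q' else 0)
          + (if s is s'.+1 then F p s' q else 0)
          + (if p is p'.+1 then s.+1%:R * F p' s.+1 q else 0).
Proof.
move=> N_gt0; apply: (@mulfI _ (2 * p + s + q)%:R); first by rewrite pnatr_eq0 -lt0n.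
rewrite !mulrDr -pair_multinomial_mulq -pair_multinomial_muls.
by rewrite -pair_multinomial_mul_unpair !natrD; ring.
Qed.

Lemma pair_multinomial_remove p s q : (0 < 2 * p + s + q)%N ->
  F p s q = (if q is q'.+1 then F p s q' else 0)
          + (if s is s'.+1 then F p s' q else 0)
          + (if p is p'.+1 then (2 * p' + s + q).+1%:R * F p' s q else 0).
Proof.
move=> N_gt0; apply: (@mulfI _ (2 * p + s + q)%:R); first by rewrite pnatr_eq0 -lt0n.
rewrite !mulrDr -pair_multinomial_mulq -pair_multinomial_muls.
by rewrite -pair_multinomial_mul_remove !natrD; ring.
Qed.

End PairMultinomial.

Section Summands.
Variables (C : numClosedFieldType) (r : C).
Local Notation F := (@pair_multinomial C).

(* The summand with [i] pairs, i.e. the term [j = n - k - i] of (iv). *)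
Definition summand12 (n k i : nat) : C :=
  if (i <= k)%N && (k + i <= n)%N then F i (k - i) (n - k - i) * ffall r (n - k - i)
  else 0.

Lemma summand12_out n k i : ~~ ((i <= k) && (k + i <= n))%N -> summand12 n k i = 0.
Proof. by rewrite /summand12 => /negbTE ->. Qed.

Lemma summand12_in n k i : (i <= k)%N -> (k + i <= n)%N ->
  summand12 n k i = F i (k - i) (n - k - i) * ffall r (n - k - i).
Proof. by rewrite /summand12 => -> ->. Qed.

Lemma summand12_rec n k i : summand12 n.+1 k i =
  (r - (n%:R - k%:R - i%:R)) * summand12 n k i
  + (if k is k'.+1 then summand12 n k' i else 0)
  + (if i is i'.+1 then (k%:R - i%:R + 1) * summand12 n k i' else 0).
Proof.
have [/andP[le_ik le_kin]|out] := boolP ((i <= k) && (k + i <= n.+1))%N; last first.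
  rewrite summand12_out // (summand12_out (n := n)) ?mulr0 ?add0r; last lia.
  have -> : (if k is k'.+1 then summand12 n k' i else 0) = 0.
    by case: k out => // k out; rewrite summand12_out //; lia.
  rewrite add0r; case: i out => [|i] out //.
  (* For [i = k.+1] the summand [summand12 n k k] survives, but its weight vanishes. *)
  have [->|ne_ik] := eqVneq i k; last by rewrite summand12_out ?mulr0 //; lia.
  by rewrite (_ : k%:R - k.+1%:R + 1 = 0) ?mul0r // -natr1; ring.
rewrite summand12_in // pair_multinomial_unpair; last lia.
rewrite [in LHS]mulrDl [in LHS]mulrDl; congr (_ + _ + _).
- case E: (n.+1 - k - i)%N => [|q]; first by rewrite mul0r summand12_out ?mulr0 //; lia.
  rewrite summand12_in; [|lia..].
  have -> : (n - k - i = q)%N by lia.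
  have -> : n%:R = k%:R + i%:R + q%:R :> C by rewrite -!natrD; congr _%:R; lia.
  by rewrite ffallS; ring.
- case: k le_ik le_kin => [|k] le_ik le_kin; first by rewrite sub0n mul0r.
  rewrite leq_eqVlt in le_ik; case/orP: le_ik => [/eqP eq_ik|lt_ik].
    by rewrite eq_ik subnn mul0r summand12_out //; lia.
  by rewrite subSn // summand12_in ?subSS //; lia.
- case: i le_ik le_kin => [|i] le_ik le_kin; first by rewrite mul0r.
  rewrite summand12_in; [|lia..].
  have -> : (n - k - i = n.+1 - k - i.+1)%N by lia.
  by rewrite -(subnSK le_ik) -[(k - i.+1).+1%:R]natr1 natrB //; ring.
Qed.

Lemma summand12_0 k i : summand12 0 k i = ((k == 0%N) && (i == 0%N))%:R.
Proof.
case: k i => [|k] [|i]; try by rewrite summand12_out //; lia.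
by rewrite summand12_in // /pair_multinomial /ffall big_ord0 !fact0 expr0 !mulr1 divr1 mulr1n.
Qed.

(* The term [j = n - k - i] of (v). *)
Definition summandN2N1 (n k i : nat) : C :=
  if (k + i <= n)%N then F i k (n - k - i) * rfact (r - 1) (n - k - i) else 0.

Lemma summandN2N1_out n k i : (n < k + i)%N -> summandN2N1 n k i = 0.
Proof. by rewrite /summandN2N1 ltnNge => /negbTE ->. Qed.

Lemma summandN2N1_in n k i : (k + i <= n)%N ->
  summandN2N1 n k i = F i k (n - k - i) * rfact (r - 1) (n - k - i).
Proof. by rewrite /summandN2N1 => ->. Qed.

Lemma summandN2N1_0 k i : summandN2N1 0 k i = ((k == 0%N) && (i == 0%N))%:R.
Proof.
case: k i => [|k] [|i]; try by rewrite summandN2N1_out //; lia.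
by rewrite summandN2N1_in // /pair_multinomial /rfact big_ord0 !fact0 expr0 !mulr1 divr1 mulr1n.
Qed.

Lemma summandN2N1_rec n k i : summandN2N1 n.+1 k i =
  (n%:R - k%:R - i%:R + r - 1) * summandN2N1 n k i
  + (if k is k'.+1 then summandN2N1 n k' i else 0)
  + (if i is i'.+1 then (n%:R + i%:R) * summandN2N1 n k i' else 0).
Proof.
have [le_kin|out] := leqP (k + i) n.+1; last first.
  rewrite summandN2N1_out // (summandN2N1_out (n := n)) ?mulr0 ?add0r; last lia.
  have -> : (if k is k'.+1 then summandN2N1 n k' i else 0) = 0.
    by case: k out => // k out; rewrite summandN2N1_out //; lia.
  by case: i out => [|i] out; rewrite ?add0r // summandN2N1_out ?mulr0 //; lia.
rewrite summandN2N1_in // pair_multinomial_remove; last lia.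
rewrite [in LHS]mulrDl [in LHS]mulrDl; congr (_ + _ + _).
- case E: (n.+1 - k - i)%N => [|q]; first by rewrite mul0r summandN2N1_out ?mulr0 //; lia.
  rewrite summandN2N1_in; last lia.
  have -> : (n - k - i = q)%N by lia.
  have -> : n%:R = k%:R + i%:R + q%:R :> C by rewrite -!natrD; congr _%:R; lia.
  by rewrite rfactS; ring.
- case: k le_kin => [|k] le_kin; first by rewrite mul0r.
  by rewrite summandN2N1_in ?subSS //; lia.
- case: i le_kin => [|i] le_kin; first by rewrite mul0r.
  rewrite summandN2N1_in; last lia.
  have -> : (n - k - i = n.+1 - k - i.+1)%N by lia.
  have -> : (2 * i + k + (n.+1 - k - i.+1)).+1 = (n + i.+1)%N by lia.
  by rewrite natrD; ring.
Qed.

End Summands.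

Section ExplicitSums.
Variable C : numClosedFieldType.
Implicit Type r : C.

Lemma summand12E r n k j : (k <= n)%N -> (j <= n - k)%N ->
  summand12 r n k (n - k - j) = 'C(n, k)%:R * k`!%:R * (2 ^+ (n - k))^-1 *
    (rfact (- r) j * rfact (- n%:R + k%:R) j / j`!%:R
     * rgamma_int C (2 * k%:Z - n%:Z + 1 + j%:Z) * 2 ^+ j).
Proof.
move=> le_kn le_jm; set m := (n - k)%N.
have -> : - n%:R + k%:R = - m%:R :> C by rewrite -(subnKC le_kn) natrD -/m; ring.
rewrite rfactNN ffall_natE // natr_binE // -/m.
have pow2E : 2 ^+ m = 2 ^+ (m - j) * 2 ^+ j :> C by rewrite -exprD subnK.
have [le_ik|lt_ki] := leqP (m - j) k; last first.
  rewrite summand12_out; last lia.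
  by rewrite rgamma_int_le0 ?(mulr0, mul0r) //; lia.
rewrite summand12_in; [|lia|lia].
have -> : (n - k - (m - j) = j)%N by lia.
have -> : (2 * k%:Z - n%:Z + 1 + j%:Z = (k - (m - j)).+1%:Z)%R by lia.
rewrite rgamma_int_pos /pair_multinomial.
have -> : (2 * (m - j) + (k - (m - j)) + j = n)%N by lia.
by rewrite pow2E; field; field_neq0.
Qed.

Lemma HS_1_2 r n k : (k <= n)%N ->
  HS 1 2 r n k = 'C(n, k)%:R * k`!%:R * (2 ^+ (n - k))^-1 *
    \sum_(j < (n - k).+1)
      rfact (- r) j * rfact (- n%:R + k%:R) j / j`!%:R
      * rgamma_int C (2 * k%:Z - n%:Z + 1 + j%:Z) * 2 ^+ j.
Proof.
move=> le_kn.
rewrite (HS_sum (H := summand12 r) (al := fun n k i => r - (n%:R - k%:R - i%:R))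
                (be := fun n k i => k%:R - i%:R + 1)).
- rewrite (@sum_rev_trunc _ _ _ (n - k) (leq_subr k n)); last first.
    by move=> i lt_i; rewrite summand12_out //; lia.
  by rewrite mulr_sumr; apply: eq_bigr => j _; rewrite summand12E // -ltnS.
- exact: summand12_0.
- by move=> n' k' i' lt_i; rewrite summand12_out //; lia.
- exact: summand12_rec.
- by move=> n' k' i'; rewrite -natr1; ring.
Qed.

Lemma summandN2N1E r n k j : (k <= n)%N -> (j <= n - k)%N ->
  summandN2N1 r n k (n - k - j) =
    'C(n, k)%:R * ((2 * n - k)`!%:R / n`!%:R) * (2 ^+ (n - k))^-1 *
    (rfact (r - 1) j * rfact (- n%:R + k%:R) j
     / (j`!%:R * rfact (- (2 * n)%:R + k%:R) j) * 2 ^+ j).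
Proof.
move=> le_kn le_jm; set m := (n - k)%N.
have -> : - n%:R + k%:R = - m%:R :> C by rewrite -(subnKC le_kn) natrD -/m; ring.
have -> : - (2 * n)%:R + k%:R = - (2 * n - k)%N%:R :> C by rewrite natrB; [ring | lia].
rewrite !rfactN !ffall_natE ?natr_binE //; last lia.
have pow2E : 2 ^+ m = 2 ^+ (m - j) * 2 ^+ j :> C by rewrite -exprD subnK.
rewrite summandN2N1_in; last lia.
have -> : (n - k - (m - j) = j)%N by lia.
have -> : (2 * n - k - j = n + (m - j))%N by lia.
rewrite /pair_multinomial.
have -> : (2 * (m - j) + k + j = n + (m - j))%N by lia.
by rewrite pow2E; field; field_neq0.
Qed.

Lemma HS_N2_N1 r n k : (k <= n)%N ->
  HS (-2) (-1) r n k = 'C(n, k)%:R * ((2 * n - k)`!%:R / n`!%:R) * (2 ^+ (n - k))^-1 *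
    \sum_(j < (n - k).+1)
      rfact (r - 1) j * rfact (- n%:R + k%:R) j
      / (j`!%:R * rfact (- (2 * n)%:R + k%:R) j) * 2 ^+ j.
Proof.
move=> le_kn.
rewrite (HS_sum (H := summandN2N1 r) (al := fun n k i => n%:R - k%:R - i%:R + r - 1)
                (be := fun n k i => n%:R + i%:R)).
- rewrite (@sum_rev_trunc _ _ _ (n - k) (leq_subr k n)); last first.
    by move=> i lt_i; rewrite summandN2N1_out //; lia.
  by rewrite mulr_sumr; apply: eq_bigr => j _; rewrite summandN2N1E // -ltnS.
- exact: summandN2N1_0.
- by move=> n' k' i' lt_i; rewrite summandN2N1_out //; lia.
- exact: summandN2N1_rec.
- by move=> n' k' i'; rewrite -natr1; ring.
Qed.

End ExplicitSums.

Theorem mainTheorem14 (C : numClosedFieldType) (n k : nat) (r : C) :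
  (k <= n)%N ->
  [/\ HS 0 0 r n k = 'C(n, k)%:R * r ^+ (n - k),
      HS 1 1 r n k = 'C(n, k)%:R * ffall r (n - k),
      HS (-1) 1 r n k = 'C(n, k)%:R * ffall (n%:R + r - 1) (n - k),
      HS 1 2 r n k = 'C(n, k)%:R * k`!%:R * (2 ^+ (n - k))^-1 *
        \sum_(j < (n - k).+1)
          rfact (- r) j * rfact (- n%:R + k%:R) j / j`!%:R
          * rgamma_int C (2 * k%:Z - n%:Z + 1 + j%:Z) * 2 ^+ j
    & HS (-2) (-1) r n k = 'C(n, k)%:R * ((2 * n - k)`!%:R / n`!%:R)
        * (2 ^+ (n - k))^-1 *
        \sum_(j < (n - k).+1)
          rfact (r - 1) j * rfact (- n%:R + k%:R) j
          / (j`!%:R * rfact (- (2 * n)%:R + k%:R) j) * 2 ^+ j].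
Proof.
move=> le_kn; split.
- exact: HS_0_0.
- exact: HS_1_1.
- exact: HS_N1_1.
- exact: HS_1_2.
- exact: HS_N2_N1.
Qed.
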